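(* Let $\mathcal R$ be a commutative ring with identity, $\mathcal M,\mathcal N$ modules over $\mathcal R$, $s\in\mathbb N$, $Y\in\mathcal M^{s\times s}$, and $f:\mathrm{Nilp}(\mathcal M,Y)\to\mathcal N_{\mathrm{nc}}$ a nc function. Assume that there are $\ell$-linear mappings $f_\ell:(\mathcal M^{s\times s})^\ell\to\mathcal N^{s\times s}$, $\ell=0,1,\dots$, such that $$f(X)=\sum_{\ell=0}^\infty\Bigl(X-\bigoplus_{\alpha=1}^mY\Bigr)^{\odot_s\ell}f_\ell$$ for all $m\in\mathbb N$ and all $X\in\mathrm{Nilp}(\mathcal M,Y)\cap\mathcal M^{sm\times sm}$ (the sum having finitely many nonzero terms). Then $f_\ell=\Delta_R^\ell f(Y,\dots,Y)$ ($\ell+1$ arguments) for all $\ell$.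
   Context: $\mathcal M_{\mathrm{nc}}=\coprod_{n\ge1}\mathcal M^{n\times n}$; matrices over $\mathcal R$ act on matrices over $\mathcal M,\mathcal N$ by matrix multiplication; $X\oplus Y=\begin{bmatrix}X&0\\0&Y\end{bmatrix}$. A nc set is a subset closed under direct sums; $\Omega_n=\Omega\cap\mathcal M^{n\times n}$. A nc function $f:\Omega\to\mathcal N_{\mathrm{nc}}$ satisfies $f(\Omega_n)\subseteq\mathcal N^{n\times n}$, $f(X\oplus Y)=f(X)\oplus f(Y)$, $f(SXS^{-1})=Sf(X)S^{-1}$ whenever $S\in\mathcal R^{n\times n}$ invertible and $X,SXS^{-1}\in\Omega_n$. For $W\in\mathcal M^{sm\times sm}$ viewed as an $m\times m$ matrix $[W_{ij}]$ with blocks in $\mathcal M^{s\times s}$, $W^{\odot_s\ell}$ is the $m\times m$ matrix over $(\mathcal M^{s\times s})^{\otimes\ell}$ with $(i,k)$ entry $\sum_{j_1,\dots,j_{\ell-1}}W_{ij_1}\otimes\cdots\otimes W_{j_{\ell-1}k}$; for an $\ell$-linear $\varphi:(\mathcal M^{s\times s})^\ell\to\mathcal N^{s\times s}$, $W^{\odot_s\ell}\varphi\in\mathcal N^{sm\times sm}$ applies $\varphi$ (as a linear map on the tensor power) entrywise; for $\ell=0$, $W^{\odot_s0}\varphi=\bigoplus_{\alpha=1}^m\varphi$. $\mathrm{Nilp}(\mathcal M,Y)=\coprod_m\{X\in\mathcal M^{sm\times sm}:(X-\bigoplus_{\alpha=1}^mY)^{\odot_s\ell}=0\text{ for some }\ell\}$;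 it is a right admissible nc set (for all $X\in\Omega_n,X'\in\Omega_{n'},Z\in\mathcal M^{n\times n'}$ some invertible $r$ gives $\begin{bmatrix}X&rZ\\0&X'\end{bmatrix}\in\Omega$). Higher order operators: $f$ extends uniquely to a nc function $\tilde f$ on $\tilde\Omega=\{SXS^{-1}\}$ via $\tilde f(SXS^{-1})=Sf(X)S^{-1}$; for right admissible $\Omega$, $X^j\in\Omega_{n_j}$, $Z^j\in\mathcal M^{n_{j-1}\times n_j}$, the block upper bidiagonal matrix $B$ with diagonal $X^0,\dots,X^\ell$ and superdiagonal $Z^1,\dots,Z^\ell$ lies in $\tilde\Omega$ and $\Delta_R^\ell f(X^0,\dots,X^\ell)(Z^1,\dots,Z^\ell)$ is the $(1,\ell+1)$ block of $\tilde f(B)$; it is multilinear, and $\Delta_R^0f=f$. *)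

From HB Require Import structures.
From mathcomp Require Import all_boot all_order all_algebra.
From Stdlib Require Import ClassicalEpsilon.
Set Implicit Arguments. Unset Strict Implicit. Unset Printing Implicit Defensive.
Import Order.TTheory GRing.Theory Num.Theory.
Local Open Scope ring_scope.

Section Defs.
Variable R : comNzRingType.

Definition lmulmx (M : lmodType R) m n p (S : 'M[R]_(m, n)) (X : 'M[M]_(n, p))
  : 'M[M]_(m, p) := \matrix_(i, j) \sum_k S i k *: X k j.
Definition rmulmx (M : lmodType R) m n p (X : 'M[M]_(m, n)) (S : 'M[R]_(n, p))
  : 'M[M]_(m, p) := \matrix_(i, j) \sum_k S k j *: X i k.
(* S X T, used with T = S^{-1} *)
Definition conjmx (M : lmodType R) n (S : 'M[R]_n) (X : 'M[M]_n) (T : 'M[R]_n)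
  : 'M[M]_n := lmulmx S (rmulmx X T).

Definition dsum (T : zmodType) n n' (X : 'M[T]_n) (X' : 'M[T]_n')
  : 'M[T]_(n + n') := block_mx X 0 0 X'.

Definition is_ncfun (M N : lmodType R) (Om : forall n, 'M[M]_n -> Prop)
  (f : forall n, 'M[M]_n -> 'M[N]_n) : Prop :=
  (forall n n' (X : 'M[M]_n) (X' : 'M[M]_n'), (0 < n)%N -> (0 < n')%N ->
     Om n X -> Om n' X' -> f (n + n')%N (dsum X X') = dsum (f n X) (f n' X'))
  /\
  (forall n (S T : 'M[R]_n) (X : 'M[M]_n), (0 < n)%N ->
     S *m T = 1%:M -> T *m S = 1%:M ->
     Om n X -> Om n (conjmx S X T) -> f n (conjmx S X T) = conjmx S (f n X) T).

Lemma blkidx_subproof m s (a : 'I_m) (i : 'I_s) : (a * s + i < m * s)%N.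
Proof.
have := ltn_ord a; have := ltn_ord i => his ham.
apply: (@leq_trans (a * s + s)); first by rewrite ltn_add2l.
by rewrite -mulSnr leq_mul2r ham orbT.
Qed.
Definition blkidx m s (a : 'I_m) (i : 'I_s) : 'I_(m * s) :=
  Ordinal (blkidx_subproof a i).

Lemma blkrow_subproof m s (i : 'I_(m * s)) : (i %/ s < m)%N.
Proof.
case: s i => [|s] i; first by case: i => i; rewrite muln0.
by rewrite ltn_divLR.
Qed.
Lemma blkcol_subproof m s (i : 'I_(m * s)) : (i %% s < s)%N.
Proof.
case: s i => [|s] i; first by case: i => i; rewrite muln0.
by rewrite ltn_mod.
Qed.
Definition blkrow m s (i : 'I_(m * s)) : 'I_m := Ordinal (blkrow_subproof i).
Definition blkcol m s (i : 'I_(m * s)) : 'I_s := Ordinal (blkcol_subproof i).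

Definition blk (T : Type) m s (W : 'M[T]_(m * s)) (a b : 'I_m) : 'M[T]_s :=
  \matrix_(i, j) W (blkidx a i) (blkidx b j).
Definition mkblk (T : Type) m s (F : 'I_m -> 'I_m -> 'M[T]_s) : 'M[T]_(m * s) :=
  \matrix_(i, j) F (blkrow i) (blkrow j) (blkcol i) (blkcol j).

Definition dsumn (T : zmodType) m s (Y : 'M[T]_s) : 'M[T]_(m * s) :=
  mkblk (fun a b => if a == b then Y else 0).

Definition scalemxM (M : lmodType R) m n (a : R) (u : 'M[M]_(m, n)) : 'M[M]_(m, n) :=
  map_mx (fun x => a *: x) u.

Definition upd (T : Type) l (x : 'I_l -> T) (k : 'I_l) (y : T) : 'I_l -> T :=
  fun j => if j == k then y else x j.
Definition multilinear_sc (M : lmodType R) (V : zmodType) (sc : R -> V -> V)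
  s l (phi : ('I_l -> 'M[M]_s) -> V) : Prop :=
  forall (x : 'I_l -> 'M[M]_s) (k : 'I_l) (a : R) (u v : 'M[M]_s),
    phi (upd x k (scalemxM a u + v)) = sc a (phi (upd x k u)) + phi (upd x k v).
Definition multilinear (M V : lmodType R) s l (phi : ('I_l -> 'M[M]_s) -> V)
  : Prop := multilinear_sc (fun a (x : V) => a *: x) phi.
Definition multilinear_mx (M N : lmodType R) s l
  (phi : ('I_l -> 'M[M]_s) -> 'M[N]_s) : Prop :=
  multilinear_sc (@scalemxM N s s) phi.

(* (a,b) entry of W^{⊙_s ℓ} φ :
   \sum_{j_1..j_{ℓ-1}} φ(W_{a j_1}, ..., W_{j_{ℓ-1} b}),
   written as a sum over paths p_0 = a, p_1, ..., p_ℓ = b in 'I_m *)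
Definition odot_entry (M : lmodType R) (V : zmodType) m s l (W : 'M[M]_(m * s))
  (phi : ('I_l -> 'M[M]_s) -> V) (a b : 'I_m) : V :=
  \sum_(p : {ffun 'I_l.+1 -> 'I_m} | (p ord0 == a) && (p ord_max == b))
     phi (fun t => blk W (p (widen_ord (leqnSn l) t)) (p (lift ord0 t))).

(* W^{⊙_s ℓ} φ ∈ N^{sm x sm}; for ℓ = 0 this is ⊕_{α=1}^m φ *)
Definition odot_apply (M N : lmodType R) m s l (W : 'M[M]_(m * s))
  (phi : ('I_l -> 'M[M]_s) -> 'M[N]_s) : 'M[N]_(m * s) :=
  mkblk (odot_entry W phi).

(* W^{⊙_s ℓ} = 0 as a matrix over the tensor power (M^{s x s})^{⊗ ℓ}:
   by the universal property of the tensor power, each entry vanishes iff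
   every ℓ-linear map into every R-module kills it. *)
Definition odot_zero (M : lmodType R) m s l (W : 'M[M]_(m * s)) : Prop :=
  forall (V : lmodType R) (phi : ('I_l -> 'M[M]_s) -> V),
    multilinear phi -> forall a b, odot_entry W phi a b = 0.

Definition Nilp (M : lmodType R) s (Y : 'M[M]_s) n (X : 'M[M]_n) : Prop :=
  exists m (e : n = (m * s)%N), (0 < m)%N /\
    exists l, odot_zero l (castmx (e, e) X - dsumn m Y).

(* --- the extension f~ on the similarity envelope of Ω:
       f~(S X S^{-1}) = S f(X) S^{-1} (a representation is chosen) --- *)
Definition tilde_f (M N : lmodType R) (Om : forall n, 'M[M]_n -> Prop)
  (f : forall n, 'M[M]_n -> 'M[N]_n) n (B : 'M[M]_n) : 'M[N]_n :=
  let p := epsilon (inhabits ((0 : 'M[R]_n), (0 : 'M[R]_n), (0 : 'M[M]_n)))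
             (fun p => [/\ Om n p.2, p.1.1 *m p.1.2 = 1%:M, p.1.2 *m p.1.1 = 1%:M
                         & B = conjmx p.1.1 p.2 p.1.2]) in
  conjmx p.1.1 (f n p.2) p.1.2.

Definition bidiag (M : lmodType R) l n (X : 'I_l.+1 -> 'M[M]_n)
  (Z : 'I_l -> 'M[M]_n) : 'M[M]_(l.+1 * n) :=
  mkblk (fun a b : 'I_l.+1 =>
    if a == b then X a
    else if (b == a.+1 :> nat) then
      (if (a < l)%N =P true is ReflectT h then Z (Ordinal h) else 0)
    else 0).

(* Δ_R^ℓ f(X^0,...,X^ℓ)(Z^1,...,Z^ℓ) = (1, ℓ+1) block of f~(B) *)
Definition DeltaR (M N : lmodType R) (Om : forall n, 'M[M]_n -> Prop)
  (f : forall n, 'M[M]_n -> 'M[N]_n) l n (X : 'I_l.+1 -> 'M[M]_n)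
  (Z : 'I_l -> 'M[M]_n) : 'M[N]_n :=
  blk (tilde_f Om f (bidiag X Z)) ord0 ord_max.

End Defs.

(* Put B := bidiag (Y, ..., Y) (Z_1, ..., Z_l).  The difference W := B - ⊕ Y
   has nonzero blocks only on the block superdiagonal, so every path with a
   nonzero contribution to an entry of W^{⊙ k} moves one block to the right
   at each step.  Hence W^{⊙ (l+1)} = 0, i.e. B lies in Nilp(M, Y) and
   f~(B) = f(B), and in the corner block (1, l+1) of the expansion of f(B)
   only the term k = l survives, contributing f_l(Z_1, ..., Z_l). *)
From Pilot Require Import Defs.
From HB Require Import structures.
From mathcomp Require Import all_boot all_order all_algebra.
From Stdlib Require Import ClassicalEpsilon FunctionalExtensionality.
Import GRing.Theory.
Local Open Scope ring_scope.
Set Implicit Arguments. Unset Strict Implicit.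

Lemma blkrow_blkidx m s (a : 'I_m) (i : 'I_s) : blkrow (blkidx a i) = a.
Proof.
apply: val_inj => /=; have s_gt0 : (0 < s)%N by case: s i => [[]|].
by rewrite divnMDl // divn_small ?addn0.
Qed.

Lemma blkcol_blkidx m s (a : 'I_m) (i : 'I_s) : blkcol (blkidx a i) = i.
Proof. by apply: val_inj => /=; rewrite modnMDl modn_small. Qed.

Lemma blk_mkblk (T : Type) m s (F : 'I_m -> 'I_m -> 'M[T]_s) a b :
  blk (mkblk F) a b = F a b.
Proof.
by apply/matrixP => i j; rewrite !mxE blkrow_blkidx !blkcol_blkidx blkrow_blkidx.
Qed.

Lemma blk0 (T : zmodType) m s (a b : 'I_m) : blk (0 : 'M[T]_(m * s)) a b = 0.
Proof. by apply/matrixP => i j; rewrite !mxE. Qed.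

Lemma blkB (T : zmodType) m s (A C : 'M[T]_(m * s)) a b :
  blk (A - C) a b = blk A a b - blk C a b.
Proof. by apply/matrixP => i j; rewrite !mxE. Qed.

Lemma blk_sum (T : zmodType) m s (a b : 'I_m) I (r : seq I) (P : pred I)
    (F : I -> 'M[T]_(m * s)) :
  blk (\sum_(k <- r | P k) F k) a b = \sum_(k <- r | P k) blk (F k) a b.
Proof.
by apply/matrixP => i j; rewrite !mxE !summxE; apply: eq_bigr => k _; rewrite mxE.
Qed.

Lemma blk_dsumn (T : zmodType) m s (Y : 'M[T]_s) (a b : 'I_m) :
  blk (dsumn m Y) a b = if a == b then Y else 0.
Proof. exact: blk_mkblk. Qed.

Definition blk_superdiag (T : zmodType) m s (W : 'M[T]_(m * s)) : Prop :=
  forall a b : 'I_m, val b != (val a).+1 -> blk W a b = 0.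

Lemma path_unit_steps m k (p : {ffun 'I_k.+1 -> 'I_m}) :
  (forall t : 'I_k, val (p (lift ord0 t)) = (val (p (widen_ord (leqnSn k) t))).+1) ->
  forall i : 'I_k.+1, val (p i) = (val (p ord0) + i)%N.
Proof.
move=> step [n n_lt]; elim: n n_lt => [|n IHn] n_lt.
  by rewrite addn0; congr (val (p _)); apply: val_inj.
have n_lt_k : (n < k)%N by [].
have -> : Ordinal n_lt = lift ord0 (Ordinal n_lt_k) by apply: val_inj.
rewrite step addnS; congr _.+1.
by rewrite -(IHn (ltnW n_lt)); congr (val (p _)); apply: val_inj.
Qed.

Section Multilinear.
Variable R : comNzRingType.

Lemma scalemxM1 (M : lmodType R) m n (u : 'M[M]_(m, n)) : scalemxM 1 u = u.
Proof. by apply/matrixP => i j; rewrite mxE scale1r. Qed.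

Lemma multilinear_sc_eq0 (M : lmodType R) (V : zmodType) (sc : R -> V -> V) s l
    (phi : ('I_l -> 'M[M]_s) -> V) :
  multilinear_sc sc phi -> (forall y, sc 1 y = y) ->
  forall x k, x k = 0 -> phi x = 0.
Proof.
move=> phi_ml sc1 x k xk0.
have -> : x = upd x k 0.
  by apply: functional_extensionality => j; rewrite /upd; case: eqP => // ->.
have := phi_ml x k 1 0 0; rewrite scalemxM1 addr0 sc1 => /eqP.
by rewrite -subr_eq subrr eq_sym => /eqP.
Qed.

Section Superdiagonal.
Variables (M : lmodType R) (V : zmodType) (sc : R -> V -> V) (m s k : nat).
Variables (W : 'M[M]_(m * s)) (phi : ('I_k -> 'M[M]_s) -> V).
Hypotheses (phi_ml : multilinear_sc sc phi) (sc1 : forall y, sc 1 y = y).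
Hypothesis W_sd : blk_superdiag W.

Let odot_term (p : {ffun 'I_k.+1 -> 'I_m}) :=
  phi (fun t => blk W (p (widen_ord (leqnSn k) t)) (p (lift ord0 t))).

Lemma odot_term_eq0 (p : {ffun 'I_k.+1 -> 'I_m}) :
  ~~ [forall t : 'I_k, val (p (lift ord0 t)) == (val (p (widen_ord (leqnSn k) t))).+1] ->
  odot_term p = 0.
Proof.
case/forallPn=> t step_t; apply: (multilinear_sc_eq0 phi_ml sc1 (k := t)).
exact: W_sd.
Qed.

Lemma odot_entry_superdiag_eq0 (a b : 'I_m) :
  (val a + k != val b)%N -> odot_entry W phi a b = 0.
Proof.
move=> ab_far; apply: big1 => p /andP[/eqP p0 /eqP pk].
apply: odot_term_eq0; apply: contra ab_far => /forallP step.
by rewrite -p0 -pk (path_unit_steps (fun t => eqP (step t)) ord_max).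
Qed.

End Superdiagonal.

Lemma odot_entry_superdiag_corner (M : lmodType R) (V : zmodType)
    (sc : R -> V -> V) s l (W : 'M[M]_(l.+1 * s)) (phi : ('I_l -> 'M[M]_s) -> V) :
  multilinear_sc sc phi -> (forall y, sc 1 y = y) -> blk_superdiag W ->
  odot_entry W phi ord0 ord_max =
    phi (fun t => blk W (widen_ord (leqnSn l) t) (lift ord0 t)).
Proof.
move=> phi_ml sc1 W_sd.
rewrite /odot_entry (bigD1 [ffun i => i]) /=; last by rewrite !ffunE !eqxx.
rewrite big1 ?addr0.
  by congr (phi _); apply: functional_extensionality => t; rewrite !ffunE.
move=> p /andP[/andP[/eqP p0 _] p_nid].
apply: (odot_term_eq0 phi_ml sc1 W_sd); apply: contra p_nid => /forallP step.
apply/eqP/ffunP => i; apply: val_inj.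
by rewrite ffunE (path_unit_steps (fun t => eqP (step t))) p0.
Qed.

End Multilinear.

Section Similarity.
Variables (R : comNzRingType) (M : lmodType R).

Lemma lmulmxA m n p q (A : 'M[R]_(m, n)) (B : 'M[R]_(n, p)) (X : 'M[M]_(p, q)) :
  lmulmx A (lmulmx B X) = lmulmx (A *m B) X.
Proof.
apply/matrixP => i j; rewrite !mxE.
under eq_bigr do rewrite mxE scaler_sumr.
rewrite exchange_big; apply: eq_bigr => k _; rewrite mxE scaler_suml.
by apply: eq_bigr => k' _; rewrite scalerA.
Qed.

Lemma rmulmxA m n p q (X : 'M[M]_(m, n)) (C : 'M[R]_(n, p)) (D : 'M[R]_(p, q)) :
  rmulmx (rmulmx X C) D = rmulmx X (C *m D).
Proof.
apply/matrixP => i j; rewrite !mxE.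
under eq_bigr do rewrite mxE scaler_sumr.
rewrite exchange_big; apply: eq_bigr => k _; rewrite mxE scaler_suml.
by apply: eq_bigr => k' _; rewrite scalerA mulrC.
Qed.

Lemma lmulmx_rmulmxA m n p q (A : 'M[R]_(m, n)) (X : 'M[M]_(n, p)) (C : 'M[R]_(p, q)) :
  lmulmx A (rmulmx X C) = rmulmx (lmulmx A X) C.
Proof.
apply/matrixP => i j; rewrite !mxE.
under eq_bigr do rewrite mxE scaler_sumr.
rewrite exchange_big; apply: eq_bigr => k _; rewrite mxE scaler_sumr.
by apply: eq_bigr => k' _; rewrite !scalerA mulrC.
Qed.

Lemma lmul1mx n p (X : 'M[M]_(n, p)) : lmulmx 1%:M X = X.
Proof.
apply/matrixP => i j; rewrite !mxE (bigD1 i) //= big1 ?addr0.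
  by rewrite mxE eqxx scale1r.
by move=> k /negbTE k_neq; rewrite mxE eq_sym k_neq scale0r.
Qed.

Lemma rmulmx1 n p (X : 'M[M]_(n, p)) : rmulmx X 1%:M = X.
Proof.
apply/matrixP => i j; rewrite !mxE (bigD1 j) //= big1 ?addr0.
  by rewrite mxE eqxx scale1r.
by move=> k /negbTE k_neq; rewrite mxE k_neq scale0r.
Qed.

Lemma conjmxM n (S T S' T' : 'M[R]_n) (X : 'M[M]_n) :
  Defs.conjmx S (Defs.conjmx T X S') T' = Defs.conjmx (S *m T) X (S' *m T').
Proof. by rewrite /Defs.conjmx -lmulmx_rmulmxA rmulmxA lmulmxA. Qed.

Lemma conj1mx n (X : 'M[M]_n) : Defs.conjmx 1%:M X 1%:M = X.
Proof. by rewrite /Defs.conjmx lmul1mx rmulmx1. Qed.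

End Similarity.

Lemma tilde_f_id (R : comNzRingType) (M N : lmodType R)
    (Om : forall n, 'M[M]_n -> Prop) (f : forall n, 'M[M]_n -> 'M[N]_n) n (X : 'M[M]_n) :
  is_ncfun Om f -> (0 < n)%N -> Om n X -> tilde_f Om f X = f n X.
Proof.
move=> [_ f_sim] n_gt0 OmX; rewrite /tilde_f /=.
set P := (fun p : 'M[R]_n * 'M[R]_n * 'M[M]_n => _).
set e := epsilon _ _.
have : P e.
  apply: epsilon_spec; exists (1%:M, 1%:M, X).
  by split; rewrite ?mulmx1 ?conj1mx.
(* Whichever representation X = S X0 T is chosen, similarity invariance of f
   at X gives f X0 = T (f X) S. *)
case: e => [[S T] X0] [/= OmX0 ST TS defX].
rewrite defX in OmX *.
have := f_sim n T S (Defs.conjmx S X0 T) n_gt0 TS ST OmX.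
rewrite conjmxM TS conj1mx => /(_ OmX0) ->.
by rewrite conjmxM ST conj1mx.
Qed.

Section Bidiagonal.
Variables (R : comNzRingType) (M : lmodType R) (s l : nat).
Variables (Y : 'M[M]_s) (Z : 'I_l -> 'M[M]_s).

Let B := bidiag (fun _ : 'I_l.+1 => Y) Z.

Lemma bidiag_sub_dsumn_superdiag : blk_superdiag (B - dsumn l.+1 Y).
Proof.
move=> a b b_nsucc; rewrite blkB blk_dsumn /B /bidiag blk_mkblk.
by case: (a == b); rewrite ?subrr // (negbTE b_nsucc) subr0.
Qed.

Lemma blk_bidiag_sub_dsumn_superdiag (t : 'I_l) :
  blk (B - dsumn l.+1 Y) (widen_ord (leqnSn l) t) (lift ord0 t) = Z t.
Proof.
rewrite blkB blk_dsumn /B /bidiag blk_mkblk.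
have -> : (widen_ord (leqnSn l) t == lift ord0 t) = false.
  by rewrite -val_eqE /= /bump leq0n add1n ltn_eqF.
rewrite eqxx subr0; case: eqP => [t_lt|]; first by congr (Z _); apply: val_inj.
by rewrite /= ltn_ord.
Qed.

Lemma Nilp_bidiag : Nilp Y B.
Proof.
exists l.+1, erefl; split => //; exists l.+1; rewrite castmx_id.
move=> V phi phi_ml a b; apply: (odot_entry_superdiag_eq0 phi_ml (@scale1r _ _)).
  exact: bidiag_sub_dsumn_superdiag.
by rewrite neq_ltn (ltn_addl _ (ltn_ord b)) orbT.
Qed.

End Bidiagonal.

Lemma sum_ord_supported (V : zmodType) L l (F : nat -> V) :
  (forall k, k != l -> F k = 0) -> ((L <= l)%N -> F l = 0) ->
  \sum_(k < L) F k = F l.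
Proof.
move=> F_supp Fl0; case: (ltnP l L) => [l_lt|L_le]; last first.
  rewrite Fl0 //; apply: big1 => k _; apply: F_supp.
  by rewrite neq_ltn (leq_trans (ltn_ord k) L_le).
rewrite (bigD1 (Ordinal l_lt)) //= big1 ?addr0 // => k k_neq.
by apply: F_supp; apply: contra k_neq => /eqP k_eq; apply/eqP/val_inj.
Qed.

Theorem theorem5p9 (R : comNzRingType) (M N : lmodType R) (s : nat)
  (Y : 'M[M]_s) (f : forall n, 'M[M]_n -> 'M[N]_n)
  (fl : forall l : nat, ('I_l -> 'M[M]_s) -> 'M[N]_s) :
  is_ncfun (Nilp Y) f ->
  (forall l, multilinear_mx (fl l)) ->
  (forall (m : nat) (X : 'M[M]_(m * s)), (0 < m)%N -> Nilp Y X ->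
     exists L : nat,
       (forall l, (L <= l)%N -> odot_apply (X - dsumn m Y) (fl l) = 0) /\
       f (m * s)%N X = \sum_(l < L) odot_apply (X - dsumn m Y) (fl l)) ->
  forall (l : nat) (Z : 'I_l -> 'M[M]_s),
    fl l Z = DeltaR (Nilp Y) f (fun _ => Y) Z.
Proof.
move=> f_nc fl_ml f_expand l Z.
have [s0|s_gt0] := posnP s; first by subst s; apply/matrixP => -[].
set B := bidiag (fun _ : 'I_l.+1 => Y) Z.
have W_sd := bidiag_sub_dsumn_superdiag Y Z.
have B_nilp : Nilp Y B := Nilp_bidiag Y Z.
have n_gt0 : (0 < l.+1 * s)%N by rewrite muln_gt0.
rewrite /DeltaR -/B (tilde_f_id f_nc n_gt0 B_nilp).
have [L [f_trunc ->]] := f_expand l.+1 B (ltn0Sn l) B_nilp.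
rewrite blk_sum (sum_ord_supported
  (l := l) (F := fun k => blk (odot_apply (B - dsumn l.+1 Y) (fl k)) ord0 ord_max)).
- rewrite blk_mkblk (odot_entry_superdiag_corner (fl_ml l) (@scalemxM1 _ _ _ _) W_sd).
  by congr (fl l _); apply: functional_extensionality => t;
    rewrite blk_bidiag_sub_dsumn_superdiag.
- move=> k k_neq; rewrite blk_mkblk.
  exact: (odot_entry_superdiag_eq0 (fl_ml k) (@scalemxM1 _ _ _ _) W_sd).
- by move=> /f_trunc ->; rewrite blk0.
Qed.
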